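(* Let $\mathrm r\in\mathbb{Z}_+^d$ with $\mathrm r>0$, and let $x\in S_d$ have length $\mathrm n\in\mathbb{N}^d$; set $k_i=-\min_{0\le n\le n_i}x^{i,i}_n$ for $i\in[d]$ and $\mathrm k=(k_1,\dots,k_d)$. If $\mathrm n$ is the smallest solution of the system $(\mathrm r,x)$, then $\mathrm k$ is the smallest solution of the system $(\mathrm r,\bar x)$. Conversely, if $n_i=\tau^{(i)}_{k_i}$ for all $i\in[d]$ and $\mathrm k$ is the smallest solution of $(\mathrm r,\bar x)$, then $\mathrm n$ is the smallest solution of $(\mathrm r,x)$.
   Context: $d\ge2$, $[d]=\{1,\dots,d\}$, $\mathbb N=\{1,2,\dots\}$. $S_d$: families $x=(x^{(1)},\dots,x^{(d)})$, $x^{(i)}=(x^{i,1},\dots,x^{i,d})$ a $\mathbb{Z}^d$-valued sequence indexed by $\{0,\dots,n_i\}$ ($0\le n_i\le\infty$), with $x^{(i)}_0=0$, $x^{i,j}$ nondecreasing for $i\ne j$, and $x^{i,i}_{n+1}-x^{i,i}_n\ge -1$; $(n_1,\dots,n_d)$ is its length; $x^{i,j}(n):=x^{i,j}_n$. Order on vectors is coordinatewise; $\mathrm q<\mathrm q'$ means $\mathrm q\le\mathrm q'$, $\mathrm q\ne\mathrm q'$. For $x$ of length $\mathrm q$, a solution of the system $(\mathrm r,x)$ is $\mathrm s\in\mathbb{Z}_+^d$ with $\mathrm s\le\mathrm q$ and $r_j+\sum_{i=1}^dx^{i,j}(s_i)=0$ for all $j\in[d]$; the smallest solution is a solution that is $\le$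 every solution. For $x\in S_d$, with $k_i=-\inf_{0\le n\le n_i}x^{i,i}_n$, define $\tau^{(i)}_k=\min\{n\ge 0:x^{i,i}_n=-k\}$ for $0\le k\le k_i$, and $\bar x^{i,j}_k=x^{i,j}(\tau^{(i)}_k)$ for $0\le k\le k_i$, $i,j\in[d]$; $\bar x=(\bar x^{(1)},\dots,\bar x^{(d)})\in S_d$ has length $(k_1,\dots,k_d)$. *)

From mathcomp Require Import all_boot all_order all_algebra.
Set Implicit Arguments. Unset Strict Implicit. Unset Printing Implicit Defensive.
Import Order.TTheory GRing.Theory Num.Theory.
Local Open Scope ring_scope.

(* A family x = (x^(1),...,x^(d)): x i j m = x^{i,j}_m (indices in 'I_d,
   i.e. [d] shifted to {0..d-1}).  Values of x i j m for m > len i are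
   irrelevant. *)
Definition seqfam (d : nat) := 'I_d -> 'I_d -> nat -> int.

Definition in_Sd (d : nat) (x : seqfam d) (len : 'I_d -> nat) : Prop :=
  (forall i j, x i j 0%N = 0) /\
  (forall i j, i != j -> forall m, (m < len i)%N -> x i j m <= x i j m.+1) /\
  (forall i m, (m < len i)%N -> - 1 <= x i i m.+1 - x i i m).

Definition is_solution (d : nat) (r : 'I_d -> nat) (x : seqfam d)
    (q : 'I_d -> nat) (s : 'I_d -> nat) : Prop :=
  (forall i, (s i <= q i)%N) /\
  (forall j, (r j)%:Z + \sum_(i < d) x i j (s i) = 0).

Definition is_smallest_solution (d : nat) (r : 'I_d -> nat) (x : seqfam d)
    (q : 'I_d -> nat) (s : 'I_d -> nat) : Prop :=
  is_solution r x q s /\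
  (forall s', is_solution r x q s' -> forall i, (s i <= s' i)%N).

(* k_i = - min_{0 <= m <= len i} x^{i,i}_m  (as a natural number; the
   min is <= x^{i,i}_0 = 0 for x in S_d) *)
Definition kdepth (d : nat) (x : seqfam d) (len : 'I_d -> nat) (i : 'I_d) : nat :=
  absz (- \big[Num.min/0]_(m < (len i).+1) x i i m).

(* tau^{(i)}_k = min { m >= 0 : x^{i,i}_m = -k }, searched in [0, len i]
   (the hitting time exists there for 0 <= k <= k_i) *)
Definition tau (d : nat) (x : seqfam d) (len : 'I_d -> nat) (i : 'I_d) (k : nat) : nat :=
  find (fun m => x i i m == - (k%:Z)) (iota 0 (len i).+1).

Definition xbar (d : nat) (x : seqfam d) (len : 'I_d -> nat) : seqfam d :=
  fun i j k => x i j (tau x len i k).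

From mathcomp Require Import all_boot all_order all_algebra zify.
Import Order.TTheory GRing.Theory Num.Theory.
Local Open Scope ring_scope.
Set Implicit Arguments. Unset Strict Implicit.

(* Call p a record time of the walk w = x^{i,i} when w_p lies strictly below
   all earlier values.  Since w moves down by at most one per step, the record
   times up to n_i are exactly the hitting times tau^{(i)}_k, k <= k_i.
   A supersolution s (all residuals r_j + sum_i x^{i,j}(s_i) nonpositive) can
   be lowered to a solution sitting at record times: if walk j had an earlier
   value at most x^{j,j}(s_j) minus the j-th residual, moving s_j back there
   keeps the j-th residual nonpositive and can only lower the others, the
   off-diagonal entries being nondecreasing; if no walk has such a value, each
   residual is nonnegative, hence zero.  So smallest solutions of (r, x) sit at
   record times, and tau transports them to and from solutions of (r, xbar). *)

Definition record_time (w : nat -> int) (p : nat) : Prop :=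
  forall q, (q < p)%N -> w p < w q.

Section DiagonalWalk.
Variables (d : nat) (x : seqfam d) (n : 'I_d -> nat).
Hypothesis hx : in_Sd x n.
Variable i : 'I_d.

Let w0 : x i i 0%N = 0. Proof. by case: hx => ->. Qed.
Let wstep m : (m < n i)%N -> - 1 <= x i i m.+1 - x i i m.
Proof. by case: hx => _ [_ /(_ i m)]. Qed.

Local Notation w := (x i i).
Local Notation N := (n i).
Local Notation depth := (kdepth x n i).
Local Notation hit := (tau x n i).

Lemma kdepthE : depth%:Z = - \big[Num.min/0]_(m < N.+1) w m.
Proof. by rewrite /kdepth gez0_abs // oppr_ge0 bigmin_le_id. Qed.

Lemma kdepth_le m : (m <= N)%N -> - depth%:Z <= w m.
Proof.
by rewrite -ltnS => hm; rewrite kdepthE opprK (bigmin_le _ (Ordinal hm)).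
Qed.

Lemma kdepth_attained : exists2 p, (p <= N)%N & w p = - depth%:Z.
Proof.
case: (@arg_minP _ _ 'I_N.+1 ord0 xpredT (fun m => w m) isT) => p _ hp.
exists (p : nat); first by rewrite -ltnS.
rewrite kdepthE opprK; apply/le_anti; rewrite bigmin_le andbT.
by apply/bigmin_geP; split=> [|m _]; [rewrite -w0 (hp ord0) | exact: hp].
Qed.

Lemma walk_hits_level k : (k <= depth)%N -> exists2 p, (p <= N)%N & w p = - k%:Z.
Proof.
move=> hk; have [p0 hp0N hp0] := kdepth_attained.
have ex : exists p, (p <= N)%N && (w p <= - k%:Z).
  by exists p0; rewrite hp0N hp0 lerN2 lez_nat.
case: (ex_minnP ex) => p /andP[hpN hwp] hmin; exists p => //.
case: p hpN hwp hmin => [|p] hpN hwp hmin; first by move: hwp; rewrite w0; lia.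
have hp : w p > - k%:Z.
  by rewrite ltNge; apply/negP => hle; have := hmin p; rewrite hle (ltnW hpN); lia.
by have := wstep hpN; lia.
Qed.

Lemma has_level p k : (p <= N)%N -> w p = - k%:Z ->
  has (fun m => w m == - k%:Z) (iota 0 N.+1).
Proof. by move=> hpN hwp; apply/hasP; exists p; [rewrite mem_iota | rewrite hwp]. Qed.

Lemma tau_spec k : (k <= depth)%N -> (hit k <= N)%N /\ w (hit k) = - k%:Z.
Proof.
case/walk_hits_level => p hpN /(has_level hpN) hhas.
have hlt : (hit k < N.+1)%N by move: hhas; rewrite has_find size_iota.
by split=> //; have := nth_find 0%N hhas; rewrite nth_iota // add0n => /eqP.
Qed.

Lemma tau_inj k k' : (k <= depth)%N -> (k' <= depth)%N -> hit k = hit k' -> k = k'.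
Proof.
move=> /tau_spec[_ hk] /tau_spec[_ hk'] e.
by apply/eqP; rewrite -eqz_nat -eqr_opp -hk -hk' e.
Qed.

Lemma tau_record_time p k :
  (p <= N)%N -> w p = - k%:Z -> record_time w p -> hit k = p.
Proof.
move=> hpN hwp hrec; have hhas := has_level hpN hwp.
have hlt : (hit k < N.+1)%N by move: hhas; rewrite has_find size_iota.
case: (ltngtP (hit k) p) => // h.
  have := nth_find 0%N hhas; rewrite nth_iota // add0n => /eqP ht.
  by have := hrec _ h; rewrite ht hwp ltxx.
by have := before_find 0%N h; rewrite nth_iota ?add0n ?hwp ?eqxx // ltnS.
Qed.

Lemma record_time_le0 p : record_time w p -> w p <= 0.
Proof. by case: p => [|p] hrec; [rewrite w0 | rewrite -w0; apply/ltW/hrec]. Qed.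

Lemma record_time_tau p :
  (p <= N)%N -> record_time w p -> (`|w p| <= depth)%N /\ hit `|w p| = p.
Proof.
move=> hpN hrec; have hwp := record_time_le0 hrec.
split; last by apply: tau_record_time; rewrite // abszE ler0_norm ?opprK.
by rewrite -lez_nat abszE ler0_norm // lerNl; apply: kdepth_le.
Qed.

Lemma record_time_tau_depth : record_time w N -> hit depth = N.
Proof.
move=> hrec; apply: tau_record_time => //.
apply/le_anti; rewrite kdepth_le // andbT kdepthE opprK.
apply/bigmin_geP; split=> [|m _]; first exact: record_time_le0.
case: (ltngtP m N) => [/hrec/ltW //|hNm|->//]; by have := ltn_ord m; lia.
Qed.

End DiagonalWalk.

Definition residual d (r : 'I_d -> nat) (x : seqfam d) (s : 'I_d -> nat) (j : 'I_d) : int :=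
  (r j)%:Z + \sum_(i < d) x i j (s i).

Definition supersolution d (r : 'I_d -> nat) (x : seqfam d) (q s : 'I_d -> nat) : Prop :=
  (forall i, (s i <= q i)%N) /\ (forall j, residual r x s j <= 0).

Lemma sum_eta_with d (f : 'I_d -> nat -> int) (s : 'I_d -> nat) j q :
  \sum_(i < d) f i ([eta s with j |-> q] i) = \sum_(i < d) f i (s i) - f j (s j) + f j q.
Proof.
rewrite (bigD1 j) //= [in RHS](bigD1 j) //= eqxx.
by rewrite (eq_bigr (fun i => f i (s i))) => [|i /negbTE ->] //; lia.
Qed.

Lemma sumn_eta_with_lt d (s : 'I_d -> nat) j q : (q < s j)%N ->
  (\sum_(i < d) [eta s with j |-> q] i < \sum_(i < d) s i)%N.
Proof.
move=> hq; rewrite (bigD1 j) //= [in X in (_ < X)%N](bigD1 j) //= eqxx.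
by rewrite (eq_bigr (fun i => s i)) => [|i /negbTE ->] //; rewrite ltn_add2r.
Qed.

Section Descent.
Variables (d : nat) (r : 'I_d -> nat) (x : seqfam d) (n : 'I_d -> nat).
Hypothesis hx : in_Sd x n.

Lemma offdiag_mono i j a b : i != j -> (a <= b)%N -> (b <= n i)%N -> x i j a <= x i j b.
Proof.
case: hx => _ [hm _] hij; elim: b => [|b IH]; first by rewrite leqn0 => /eqP ->.
rewrite leq_eqVlt => /orP[/eqP -> //|hab] hb.
exact: le_trans (IH hab (ltnW hb)) (hm _ _ hij _ hb).
Qed.

Lemma offdiag_ge0 i j a : i != j -> (a <= n i)%N -> 0 <= x i j a.
Proof.
by move=> hij ha; case: (hx) => h0 _; rewrite -(h0 i j) offdiag_mono.
Qed.

Lemma supersolution_eta_with s j q :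
  supersolution r x n s -> (q < s j)%N -> x j j q <= x j j (s j) - residual r x s j ->
  supersolution r x n [eta s with j |-> q].
Proof.
move=> [hsn hres] hq hjq; split=> [i|i].
  by rewrite /=; case: eqP => [->|_] //; apply: ltnW (leq_trans hq (hsn j)).
rewrite /residual (sum_eta_with (fun a => x a i)); have := hres i; rewrite /residual.
case: (eqVneq i j) => [->|hij]; first by move: hjq; rewrite /residual; lia.
have hji : j != i by rewrite eq_sym.
have := offdiag_mono hji (ltnW hq) (hsn j); lia.
Qed.

Lemma residual_ge0 s j : supersolution r x n s ->
  (forall q, (q < s j)%N -> x j j (s j) - residual r x s j < x j j q) ->
  0 <= residual r x s j.
Proof.
case: hx => h0 [_ hstep] [hsn _]; case E: (s j) => [|q] hrec.
  rewrite /residual; apply: addr_ge0 => //; apply: sumr_ge0 => i _.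
  case: (eqVneq i j) => [->|hij]; first by rewrite E h0.
  exact: offdiag_ge0 hij (hsn i).
have := hrec q (ltnSn q); have := hstep j q; rewrite -E hsn E; lia.
Qed.

Lemma supersolution_descent s : supersolution r x n s ->
  exists m, [/\ forall i, (m i <= s i)%N, forall j, residual r x m j = 0
              & forall j, record_time (x j j) (m j)].
Proof.
have [N] := ubnP (\sum_i s i); elim: N s => // N IH s hsum hs.
have [/existsP[j /existsP[q hjq]]|stable] := boolP [exists j, exists q : 'I_(s j),
    x j j q <= x j j (s j) - residual r x s j].
  have [|m [hm hmres hmrec]] := IH _ _ (supersolution_eta_with hs (ltn_ord q) hjq).
    by rewrite -ltnS; apply: leq_trans hsum; rewrite ltnS sumn_eta_with_lt.
  exists m; split=> // i; apply: leq_trans (hm i) _.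
  by rewrite /=; case: eqP => [->|_] //; apply: ltnW.
have hstable j q : (q < s j)%N -> x j j (s j) - residual r x s j < x j j q.
  by move=> hq; move/existsPn: stable => /(_ j) /existsPn /(_ (Ordinal hq)); rewrite ltNge.
have hres0 j : residual r x s j = 0.
  by apply/le_anti; rewrite hs.2 (residual_ge0 hs (hstable j)).
exists s; split=> // j q hq; by have := hstable j q hq; rewrite hres0 subr0.
Qed.

End Descent.

Section SmallestSolution.
Variables (d : nat) (r : 'I_d -> nat) (x : seqfam d) (n : 'I_d -> nat).
Hypothesis hx : in_Sd x n.

Lemma smallest_solution_xbar :
  is_smallest_solution r x n n ->
  is_smallest_solution r (xbar x n) (kdepth x n) (kdepth x n).
Proof.
move=> [[_ hnsol] hnmin].
have hsup : supersolution r x n n by split=> // j; rewrite /residual hnsol.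
have [m [hmn hmsol hmrec]] := supersolution_descent hx hsup.
have hnm i : m i = n i by apply/anti_leq; rewrite hmn hnmin.
have htau i : tau x n i (kdepth x n i) = n i.
  by apply: record_time_tau_depth; rewrite // -hnm.
split.
  split=> // j; rewrite -[RHS](hnsol j); congr (_ + _).
  by apply: eq_bigr => i _; rewrite /xbar htau.
move=> s [hsk hssol] i.
have htsn j : (tau x n j (s j) <= n j)%N by have [] := tau_spec hx (hsk j).
have hnts : (n i <= tau x n i (s i))%N.
  exact: hnmin (fun j => tau x n j (s j)) (conj htsn hssol) i.
have e : tau x n i (s i) = tau x n i (kdepth x n i).
  by rewrite htau; apply/anti_leq; rewrite htsn hnts.
by rewrite (tau_inj hx (hsk i) (leqnn _) e).
Qed.

Lemma smallest_solution_of_xbar :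
  (forall i, n i = tau x n i (kdepth x n i)) ->
  is_smallest_solution r (xbar x n) (kdepth x n) (kdepth x n) ->
  is_smallest_solution r x n n.
Proof.
move=> hntau [[_ hksol] hkmin].
split.
  split=> // j; rewrite -[RHS](hksol j); congr (_ + _).
  by apply: eq_bigr => i _; rewrite /xbar -hntau.
move=> s [hsn hssol] i.
have hsup : supersolution r x n s by split=> // j; rewrite /residual hssol.
have [m [hms hmsol hmrec]] := supersolution_descent hx hsup.
have hmn j : (m j <= n j)%N := leq_trans (hms j) (hsn j).
pose h j := `|x j j (m j)|%N.
have hhk j : (h j <= kdepth x n j)%N := (record_time_tau hx (hmn j) (hmrec j)).1.
have htau j : tau x n j (h j) = m j := (record_time_tau hx (hmn j) (hmrec j)).2.
have hhsol : is_solution r (xbar x n) (kdepth x n) h.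
  split=> // j; rewrite -[RHS](hmsol j); congr (_ + _).
  by apply: eq_bigr => k _; rewrite /xbar htau.
have e : h i = kdepth x n i by apply/anti_leq; rewrite hhk (hkmin _ hhsol).
by rewrite hntau -e htau.
Qed.

End SmallestSolution.

Theorem lemma2p6 (d : nat) (hd : (2 <= d)%N) (r : 'I_d -> nat)
    (hr : exists i, r i != 0%N)
    (x : seqfam d) (n : 'I_d -> nat) (hn : forall i, (0 < n i)%N)
    (hx : in_Sd x n) :
  (is_smallest_solution r x n n ->
     is_smallest_solution r (xbar x n) (kdepth x n) (kdepth x n)) /\
  ((forall i, n i = tau x n i (kdepth x n i)) ->
     is_smallest_solution r (xbar x n) (kdepth x n) (kdepth x n) ->
     is_smallest_solution r x n n).
Proof.
split; [exact: smallest_solution_xbar | exact: smallest_solution_of_xbar].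
Qed.
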